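(* Let $p$ be an odd prime. If $g\in G$ is a non-identity element of finite order, then $g$ has fewer than $p$ fixed points on $M(\mathbb{F}_p)$.
   Context: $M(\mathbb{F}_p)$ denotes the set of triples $(x,y,z)\in\mathbb{F}_p^3\setminus\{(0,0,0)\}$ satisfying $x^2+y^2+z^2=xyz$. The Markoff moves are the maps $m_1(x,y,z)=(yz-x,y,z)$, $m_2(x,y,z)=(x,xz-y,z)$, $m_3(x,y,z)=(x,y,xy-z)$ on $M(\mathbb{F}_p)$. Let $G=\mathbb{Z}/2*\mathbb{Z}/2*\mathbb{Z}/2$ be the free product with generators $m_1,m_2,m_3$; it acts on $M(\mathbb{F}_p)$ with $m_i$ acting by the $i$-th Markoff move. *)

From HB Require Import structures.
From mathcomp Require Import all_boot all_order all_algebra.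
Set Implicit Arguments. Unset Strict Implicit. Unset Printing Implicit Defensive.
Import GRing.Theory.
Local Open Scope ring_scope.

Definition triple (p : nat) := ('F_p * 'F_p * 'F_p)%type.

Definition markoff (p : nat) : {set triple p} :=
  [set t : triple p | let: (x, y, z) := t in
     (t != (0, 0, 0)) && (x ^+ 2 + y ^+ 2 + z ^+ 2 == x * y * z)].

(* The Markoff moves m_1, m_2, m_3 (indexed by 'I_3 = {0,1,2}). *)
Definition mmove (p : nat) (i : 'I_3) (t : triple p) : triple p :=
  let: (x, y, z) := t in
  match val i with
  | 0 => (y * z - x, y, z)
  | 1 => (x, x * z - y, z)
  | _ => (x, y, x * y - z)
  end.

(* The group G = Z/2 * Z/2 * Z/2 with generators m_1, m_2, m_3 is modelled by
   its normal form: reduced words over the letters 'I_3, i.e. words with no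
   two equal adjacent letters.  The word [:: i1; ...; ik] denotes
   m_{i1} m_{i2} ... m_{ik}. *)
Definition reduced (w : seq 'I_3) : bool := sorted (fun a b => a != b) w.

Definition push (a : 'I_3) (w : seq 'I_3) : seq 'I_3 :=
  if w is b :: w' then (if a == b then w' else a :: w) else [:: a].

Definition reduce (w : seq 'I_3) : seq 'I_3 := foldr push [::] w.

Definition gmul (g h : seq 'I_3) : seq 'I_3 := reduce (g ++ h).
Definition gone : seq 'I_3 := [::].
Definition gpow (g : seq 'I_3) (n : nat) : seq 'I_3 := iter n (gmul g) gone.

Definition finite_order (g : seq 'I_3) : Prop :=
  exists n : nat, (0 < n)%N /\ gpow g n = gone.

Definition gact (p : nat) (g : seq 'I_3) (t : triple p) : triple p :=
  foldr (fun i u => mmove i u) t g.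

Definition fixed_points (p : nat) (g : seq 'I_3) : {set triple p} :=
  [set t in markoff p | gact g t == t].

From HB Require Import structures.
From mathcomp Require Import all_boot all_order all_algebra.
From mathcomp Require Import ring.
Set Implicit Arguments. Unset Strict Implicit. Unset Printing Implicit Defensive.
Import GRing.Theory.

(* A reduced word of finite order in Z/2 * Z/2 * Z/2 is a conjugate
   w m_i w^-1 of a generator: otherwise it is w c w^-1 with c cyclically
   reduced of length at least 2, and its powers w c^n w^-1 are reduced and
   never trivial.  Its fixed points are then the image under w of those of
   m_i, and a permutation of coordinates carries these to the fixed points
   of m_3.  A Markoff triple (x, y, z) fixed by m_3 has x y = 2 z, hence
   x^2 y^2 = 4 (x^2 + y^2), i.e. (2/x, 2/y) lies on the unit circle; its
   stereographic coordinate t = 2 x / (y (x + 2)) is nonzero and determines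
   the triple, so there are at most p - 1 such triples. *)

Definition joinable (a b : seq 'I_3) : bool :=
  if a is x :: a' then (if b is y :: _ then last x a' != y else true) else true.

Lemma reduced_cat a b : reduced (a ++ b) = [&& reduced a, reduced b & joinable a b].
Proof.
case: a => [|x a] /=; first by rewrite andbT.
case: b => [|y b] /=; first by rewrite cats0 andbT.
by rewrite /reduced /= cat_path /= (andbC (last _ _ != _)).
Qed.

Lemma joinable_catr a b e : b != [::] -> joinable a (b ++ e) = joinable a b.
Proof. by case: a => // x a; case: b. Qed.

Lemma joinable_ends a b : a != [::] -> b != [::] ->
  joinable a b = (last ord0 a != head ord0 b).
Proof. by case: a => // x a; case: b. Qed.

Lemma foldr_push_reduced c y : reduced (c ++ y) -> foldr push y c = c ++ y.
Proof.
elim: c => // a c IHc /= Hacy.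
rewrite IHc; last by move: Hacy; rewrite /reduced /=; apply: path_sorted.
move: Hacy; rewrite /push; case: (c ++ y) => // b s.
by rewrite /reduced /= => /andP[/negbTE -> _].
Qed.

Lemma foldr_push_rev w y : foldr push (w ++ y) (rev w) = y.
Proof. by elim: w => //= a w IHw; rewrite rev_cons -cats1 foldr_cat /= eqxx. Qed.

Lemma reduce_id w : reduced w -> reduce w = w.
Proof. by move=> Hw; rewrite /reduce foldr_push_reduced cats0. Qed.

Lemma reduced_conj_decomp g : reduced g -> g != [::] ->
  exists w c, [/\ g = w ++ c ++ rev w, c != [::] &
                  (size c == 1)%N || (head ord0 c != last ord0 c)].
Proof.
elim: {g}(size g) {-2}g (leqnn (size g)) => [|n IHn] g.
  by rewrite leqn0 size_eq0 => /eqP ->.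
case: g => // x g; case/lastP: g => [|m y] Hsize Hred _.
  by exists [::], [:: x].
have [Exy|Nxy] := eqVneq x y; last first.
  exists [::], (x :: rcons m y); split=> //; first by rewrite /= cats0.
  by rewrite /= last_rcons Nxy orbT.
subst y; case: m Hsize Hred => [|z m] Hsize Hred.
  by move: Hred; rewrite /reduced /= eqxx.
have Hm : reduced (z :: m).
  by move: Hred; rewrite /reduced /= -cats1 cat_path => /andP[_ /andP[]].
have [|w [c [-> Hc Hcyc]]] := IHn (z :: m) _ Hm isT.
  by move: Hsize; rewrite /= size_rcons !ltnS; apply: leq_trans.
by exists (x :: w), c; split=> //; rewrite rev_cons -!cats1 /= -!catA.
Qed.

Section ConjugatePowers.
Variables w c : seq 'I_3.
Hypotheses (Hred : reduced (w ++ c ++ rev w)) (Hc : c != [::])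
  (Hcyc : head ord0 c != last ord0 c).

Definition same_ends (d : seq 'I_3) : Prop :=
  [/\ d != [::], reduced (w ++ d ++ rev w),
      head ord0 d = head ord0 c & last ord0 d = last ord0 c].

Lemma same_ends_cat d : same_ends d -> same_ends (c ++ d).
Proof.
case=> Hd Hdred Hhead Hlast; split.
- by case: c Hc.
- move: Hred Hdred; rewrite -!catA !reduced_cat.
  move=> /and3P[-> /and3P[-> -> Hcw] Hwc] /and3P[_ /and3P[-> _ ->] _].
  rewrite joinable_catr // joinable_ends // Hhead eq_sym Hcyc /=.
  by move: Hwc; rewrite !joinable_catr.
- by case: c Hc.
- by rewrite -Hlast; case: d Hd {Hdred Hhead Hlast} => // y d _; rewrite last_cat.
Qed.

Lemma gpow_conj n : exists2 d, gpow (w ++ c ++ rev w) n.+1 = w ++ d ++ rev w & same_ends d.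
Proof.
elim: n => [|n [d Epow Hd]]; first by exists c; rewrite // /gpow /= /gmul cats0 reduce_id.
exists (c ++ d); last exact: same_ends_cat.
have [_ Hdred _ _] := Hd; have [_ Hcdred _ _] := same_ends_cat Hd.
have Hcdw : reduced (c ++ d ++ rev w).
  by move: Hcdred; rewrite -catA reduced_cat => /and3P[].
rewrite /gpow iterS -/(gpow _ n.+1) Epow /gmul /reduce foldr_cat.
rewrite -/(reduce _) reduce_id // !foldr_cat foldr_push_rev (foldr_push_reduced Hcdw).
by rewrite -catA in Hcdred; rewrite foldr_push_reduced // -catA.
Qed.

Lemma gpow_conj_neq1 n : gpow (w ++ c ++ rev w) n.+1 != gone.
Proof. by have [d -> [Hd _ _ _]] := gpow_conj n; case: w; case: d Hd. Qed.

End ConjugatePowers.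

Lemma finite_order_conj_generator g : reduced g -> g != [::] -> finite_order g ->
  exists w i, g = w ++ [:: i] ++ rev w.
Proof.
move=> Hred Hg [[|n] [// _ Hpow]].
have [w [c [Eg Hc /orP[Hsize|Hcyc]]]] := reduced_conj_decomp Hred Hg.
  by case: c Hc Hsize Eg => [|i [|]] // _ _ ->; exists w, i.
by rewrite Eg in Hred Hpow; move: (gpow_conj_neq1 Hred Hc Hcyc n); rewrite Hpow.
Qed.

Local Open Scope ring_scope.

Section StereographicCoordinate.
Variable F : fieldType.
Hypothesis two_neq0 : (2 : F) != 0.

Lemma four_neq0 : (4 : F) != 0.
Proof. by rewrite (_ : 4 = 2 * 2) ?mulf_neq0 //; ring. Qed.

Definition fixed_curve (a b : F) : Prop := a ^+ 2 * b ^+ 2 = 4 * (a ^+ 2 + b ^+ 2).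

(* With u = 2 / a and v = 2 / b the curve is the unit circle u^2 + v^2 = 1,
   and stereo a b = v / (1 + u) is the stereographic projection from (-1, 0). *)
Definition stereo (a b : F) : F := 2 * a / (b * (a + 2)).

Section OnTheCurve.
Variables a b : F.
Hypotheses (Hcurve : fixed_curve a b) (Ha : a != 0).

Lemma fixed_curve_neq0r : b != 0.
Proof.
apply: contra Ha => /eqP Hb; move: Hcurve; rewrite Hb => /eqP.
by rewrite expr0n mulr0 addr0 eq_sym mulf_eq0 (negbTE four_neq0) sqrf_eq0.
Qed.

Lemma fixed_curve_add2_neq0 : a + 2 != 0.
Proof.
rewrite addr_eq0; apply/eqP => Ea; move: Hcurve; rewrite Ea => /eqP.
rewrite -subr_eq0 (_ : _ - _ = - (4 * 4)); last by ring.
by rewrite oppr_eq0 mulf_eq0 orbb (negbTE four_neq0).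
Qed.

Let t := stereo a b.

Lemma stereo_neq0 : t != 0.
Proof.
by rewrite /t /stereo !(mulf_neq0, invr_neq0) ?fixed_curve_neq0r ?fixed_curve_add2_neq0.
Qed.

Lemma stereo_sqr : t ^+ 2 * (a + 2) = a - 2.
Proof.
have Hb := fixed_curve_neq0r; have Ha2 := fixed_curve_add2_neq0.
apply: (mulIf (mulf_neq0 (expf_neq0 2 Hb) Ha2)).
have -> : t ^+ 2 * (a + 2) * (b ^+ 2 * (a + 2)) = (2 * a) ^+ 2.
  by rewrite /t /stereo; field; rewrite Hb Ha2.
apply/eqP; rewrite -subr_eq0 (_ : _ - _ = 4 * (a ^+ 2 + b ^+ 2)
  - a ^+ 2 * b ^+ 2); last by ring.
by rewrite Hcurve subrr.
Qed.

Lemma stereo_sqr_neq1 : 1 - t ^+ 2 != 0.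
Proof.
apply: contra two_neq0 => /eqP Et; have := stereo_sqr.
rewrite (_ : t ^+ 2 = 1); last by apply/eqP; rewrite eq_sym -subr_eq0 Et.
move/eqP; rewrite -subr_eq0 (_ : _ - _ = 2 * 2); last by ring.
by rewrite mulf_eq0 orbb.
Qed.

Lemma stereoKl : a = 2 * (1 + t ^+ 2) / (1 - t ^+ 2).
Proof.
apply: (canRL (mulfK stereo_sqr_neq1)); apply/eqP; rewrite -subr_eq0.
rewrite (_ : _ - _ = a - 2 - t ^+ 2 * (a + 2)); last by ring.
by rewrite stereo_sqr subrr.
Qed.

Lemma stereoKr : b = 2 * a / (t * (a + 2)).
Proof.
rewrite /t /stereo; field.
by rewrite fixed_curve_neq0r fixed_curve_add2_neq0 Ha.
Qed.

End OnTheCurve.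

Lemma stereo_inj a1 b1 a2 b2 : fixed_curve a1 b1 -> a1 != 0 ->
  fixed_curve a2 b2 -> a2 != 0 -> stereo a1 b1 = stereo a2 b2 -> a1 = a2 /\ b1 = b2.
Proof.
move=> C1 Ha1 C2 Ha2 Et.
have Ea : a1 = a2 by rewrite (stereoKl C1 Ha1) (stereoKl C2 Ha2) Et.
by split; rewrite // (stereoKr C1 Ha1) (stereoKr C2 Ha2) Et Ea.
Qed.

(* [a * b = c + c] says that (a, b, c) is fixed by m_3. *)
Lemma markoff_fixed_curve a b c : a * b = c + c -> a ^+ 2 + b ^+ 2 + c ^+ 2 = a * b * c ->
  (a, b, c) != (0, 0, 0) -> fixed_curve a b /\ a != 0.
Proof.
move=> Efix Em Hnz.
have Hcurve : fixed_curve a b.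
  apply/eqP; rewrite -subr_eq0 (_ : _ - _ = (a * b - (c + c)) ^+ 2
      - 4 * (a ^+ 2 + b ^+ 2 + c ^+ 2 - a * b * c)); last by ring.
  by rewrite Em subrr Efix subrr expr0n mulr0 subrr.
split=> //; apply: contra Hnz => /eqP Ha.
have Hb : b = 0.
  apply/eqP; move: Hcurve; rewrite /fixed_curve Ha => /eqP.
  by rewrite expr0n mul0r add0r eq_sym mulf_eq0 (negbTE four_neq0) sqrf_eq0.
have Hc : c = 0.
  apply/eqP; move: Efix; rewrite Ha mul0r -mulr2n -mulr_natl => /eqP.
  by rewrite eq_sym mulf_eq0 (negbTE two_neq0).
by rewrite Ha Hb Hc.
Qed.

End StereographicCoordinate.

Section MarkoffAction.
Variable p : nat.

Definition markoff_form (t : triple p) : 'F_p :=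
  let: (x, y, z) := t in x ^+ 2 + y ^+ 2 + z ^+ 2 - x * y * z.

Lemma in_markoff t : (t \in markoff p) = (t != (0, 0, 0)) && (markoff_form t == 0).
Proof. by case: t => [[x y] z]; rewrite inE subr_eq0. Qed.

Lemma in_fixed_points g t :
  (t \in fixed_points p g) = (t \in markoff p) && (gact g t == t).
Proof. exact: in_set. Qed.

Lemma mmoveK i : involutive (@mmove p i).
Proof. by case=> [[x y] z]; case: i => [[|[|[|k]]] Hk] //=; congr (_, _, _); ring. Qed.

Lemma mmove0 i : mmove i (0, 0, 0) = (0, 0, 0) :> triple p.
Proof. by case: i => [[|[|[|k]]] Hk] //=; congr (_, _, _); ring. Qed.

Lemma markoff_form_mmove i t : markoff_form (mmove i t) = markoff_form t.
Proof. by case: t => [[x y] z]; case: i => [[|[|[|k]]] Hk] /=; ring. Qed.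

Lemma markoff_mmove i t : t \in markoff p -> mmove i t \in markoff p.
Proof.
rewrite !in_markoff markoff_form_mmove -{2}(mmove0 i).
by rewrite (inj_eq (can_inj (mmoveK i))).
Qed.

Lemma gact_cat v w t : gact (v ++ w) t = gact v (@gact p w t).
Proof. exact: foldr_cat. Qed.

Lemma gactK w : cancel (@gact p w) (gact (rev w)).
Proof.
elim: w => // i w IHw t.
by rewrite rev_cons -cats1 gact_cat /= mmoveK IHw.
Qed.

Lemma gactKV w : cancel (@gact p (rev w)) (gact w).
Proof. by move=> t; rewrite -{1}(revK w) gactK. Qed.

Lemma markoff_gact w t : t \in markoff p -> gact w t \in markoff p.
Proof. by elim: w => //= i w IHw Ht; apply/markoff_mmove/IHw. Qed.

Lemma fixed_points_conj w g :
  fixed_points p (w ++ g ++ rev w) = gact w @: fixed_points p g.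
Proof.
apply/setP=> t; rewrite in_fixed_points; apply/andP/imsetP => [[Ht]|[s]].
  rewrite !gact_cat -{2}(gactKV w t) (can_eq (gactK w)) => Hfix.
  by exists (gact (rev w) t); rewrite ?gactKV // in_fixed_points markoff_gact.
rewrite in_fixed_points => /andP[Hs /eqP Hfix] ->.
by rewrite markoff_gact // !gact_cat gactK Hfix.
Qed.

(* The generator m_i becomes m_3 once the coordinate it changes is put last. *)
Definition move_coord_last (i : 'I_3) (t : triple p) : triple p :=
  let: (x, y, z) := t in
  match val i with 0 => (y, z, x) | 1 => (x, z, y) | _ => (x, y, z) end.

Lemma move_coord_last_inj i : injective (move_coord_last i).
Proof.
by case: i => [[|[|[|k]]] Hk] [[x1 y1] z1] [[x2 y2] z2] //= [-> -> ->].
Qed.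

Lemma move_coord_last_fixed i t : t \in fixed_points p [:: i] ->
  move_coord_last i t \in fixed_points p [:: ord_max].
Proof.
have Hzero : move_coord_last i (0, 0, 0) = (0, 0, 0) by case: i => [[|[|[|k]]] Hk].
rewrite !in_fixed_points !in_markoff -{2}Hzero (inj_eq (@move_coord_last_inj i)).
case: t => [[x y] z]; case: i {Hzero} => [[|[|[|k]]] Hk] //=.
all: move=> /andP[/andP[-> /eqP Hm] /eqP[Hfix]].
all: by rewrite Hfix eqxx andbT; apply/eqP; rewrite -Hm; ring.
Qed.

End MarkoffAction.

Section OddPrime.
Variable p : nat.
Hypotheses (Hp : prime p) (Hodd : odd p).

Lemma Fp_two_neq0 : (2 : 'F_p) != 0.
Proof.
rewrite -(dvdn_pcharf (pchar_Fp Hp)) dvdn_prime2 //.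
by apply: contraL Hodd => /eqP ->.
Qed.

Lemma fixed_points_m3_curve x y z : (x, y, z) \in fixed_points p [:: ord_max] ->
  [/\ fixed_curve x y, x != 0 & z = x * y / 2].
Proof.
rewrite !inE => /andP[/andP[Hnz /eqP Hm] /eqP[Hfix]].
have Efix : x * y = z + z by apply/eqP; rewrite -subr_eq Hfix.
have [Hcurve Hx] := markoff_fixed_curve Fp_two_neq0 Efix Hm Hnz.
split=> //; apply: (canRL (mulfK Fp_two_neq0)).
by rewrite Efix; ring.
Qed.

Lemma card_fixed_points_m3 : (#|fixed_points p [:: ord_max]| < p)%N.
Proof.
pose key (t : triple p) := let: (x, y, _) := t in stereo x y.
have key_inj : {in fixed_points p [:: ord_max] &, injective key}.
  move=> [[x1 y1] z1] [[x2 y2] z2] /fixed_points_m3_curve[C1 Hx1 ->].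
  move=> /fixed_points_m3_curve[C2 Hx2 ->] /=.
  by case/(stereo_inj Fp_two_neq0 C1 Hx1 C2 Hx2) => -> ->.
have key_neq0 : key @: fixed_points p [:: ord_max] \subset [set~ 0].
  apply/subsetP=> _ /imsetP[[[x y] z] /fixed_points_m3_curve[C Hx _] ->].
  by rewrite !inE (stereo_neq0 Fp_two_neq0).
rewrite -(card_in_imset key_inj); apply: leq_ltn_trans (subset_leq_card key_neq0) _.
by rewrite cardsC1 card_Fp // prednK ?prime_gt0.
Qed.

Lemma card_fixed_points_generator i : (#|fixed_points p [:: i]| < p)%N.
Proof.
apply: leq_ltn_trans card_fixed_points_m3.
rewrite -(card_imset _ (@move_coord_last_inj p i)); apply/subset_leq_card/subsetP.
by move=> _ /imsetP[t Ht ->]; apply: move_coord_last_fixed.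
Qed.

End OddPrime.

Theorem lemma6p4 (p : nat) (Hp : prime p) (Hodd : odd p) (g : seq 'I_3) :
  reduced g -> g <> gone -> finite_order g ->
  (#|fixed_points p g| < p)%N.
Proof.
move=> Hred /eqP Hg Hfin.
have [w [i ->]] := finite_order_conj_generator Hred Hg Hfin.
rewrite fixed_points_conj (card_imset _ (can_inj (@gactK p w))).
exact: card_fixed_points_generator.
Qed.
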